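(* Let $m\ge1$ and suppose $u=u_1\ldots u_n\in[m]^*$ is weakly increasing ($u_1\le\cdots\le u_n$). Then $$S(u;x_1,\ldots,x_m)=\frac{\prod_{i=1}^n\sum_{j=u_i}^m x_j}{\left(1+\sum_{i=1}^{n-1}\prod_{j=i+1}^n\sum_{l=u_j}^m x_l\right)\left(1-\sum_{i=1}^m x_i\right)+\prod_{i=1}^n\sum_{j=u_i}^m x_j}.$$
   Context: $[m]^*$ is the set of finite words over $[m]=\{1,\ldots,m\}$ with the usual order. An embedding of $u$ into $w$ is a string of $|u|$ consecutive letters of $w$ whose $i$-th letter is $\ge$ the $i$-th letter of $u$ for every $i$. $\mathcal{S}(u)$ is the set of words $w$ admitting an embedding of $u$ such that the last $|u|$ letters of $w$ form the only embedding of $u$ into $w$. For $w\in[m]^*$, $c_i(w)$ is the number of occurrences of $i$ in $w$ and $W_{[m]}(w)=\prod_{i=1}^m x_i^{c_i(w)}$. $S(u;x_1,\ldots,x_m)=\sum_{w\in\mathcal{S}(u)\cap[m]^*}W_{[m]}(w)$. *)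

From HB Require Import structures.
From mathcomp Require Import all_boot all_order all_algebra.
Set Implicit Arguments. Unset Strict Implicit. Unset Printing Implicit Defensive.
Import Order.TTheory GRing.Theory Num.Theory.
Local Open Scope ring_scope.

(* A monomial x_1^{e 0} ... x_m^{e (m-1)} : exponent of x_{i+1} is e i. *)
Definition monom (m : nat) := {ffun 'I_m -> nat}.
Definition series (m : nat) := monom m -> int.

Definition sadd m (a b : series m) : series m := fun e => a e + b e.
Definition sneg m (a : series m) : series m := fun e => - a e.
Definition ssub m (a b : series m) : series m := sadd a (sneg b).
Definition szero m : series m := fun _ => 0.
Definition sone m : series m := fun e => if e == [ffun _ => 0%N] then 1 else 0.
(* Cauchy product: coefficient of e is the sum over f <= e of a_f * b_(e-f). *)
Definition smul m (a b : series m) : series m := fun e =>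
  \sum_(g : {ffun 'I_m -> 'I_((\sum_i e i)%N).+1} | [forall i, (g i <= e i)%N])
     a [ffun i => val (g i)] * b [ffun i => (e i - g i)%N].
Definition X m (j : nat) : series m :=
  fun e => if e == [ffun i : 'I_m => ((i.+1 == j) : nat)] then 1 else 0.

Definition T m (a : nat) : series m := \big[@sadd m/@szero m]_(a <= j < m.+1) @X m j.

(* Words over [m] = {1,...,m} are seq nat with letters in [1,m]. *)
(* An embedding of u into w starting at position i (0-based). *)
Definition embeds_at (u w : seq nat) (i : nat) : bool :=
  ((i + size u <= size w)%N) &&
  all (fun k => (nth 0%N u k <= nth 0%N w (i + k))%N) (iota 0 (size u)).

(* w in S(u): u embeds into w at the last |u| letters, and this is the only embedding. *)
Definition inS (u w : seq nat) : bool :=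
  embeds_at u w (size w - size u)%N &&
  all (fun i => embeds_at u w i ==> (i == size w - size u)%N) (iota 0 (size w).+1).

(* The word in [m]^* given by a tuple of 'I_m (letter a |-> a+1). *)
Definition word_of m (t : seq 'I_m) : seq nat := map (fun a : 'I_m => (val a).+1) t.

Definition content m (w : seq nat) : monom m := [ffun i : 'I_m => count_mem i.+1 w].

(* S(u; x_1..x_m): coefficient of x^e is the number of words w in S(u) cap [m]^*
   with c_i(w) = e_i; such words have length sum_i e_i. *)
Definition Sser m (u : seq nat) : series m := fun e =>
  (#|[set t : ((\sum_i e i)%N).-tuple 'I_m |
       (content m (word_of t) == e) && inS u (word_of t)]|)%:Z.

(* Work with series in noncommuting letters, indexed by words, and map them to
   commutative series by [abel], which turns concatenation into multiplication.
   Let S be the sum of the words of S(u), F that of the words into which u does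
   not embed, N that of the words of length n dominating u letterwise, C that of
   the words shorter than u dominating the suffix of u of the same length
   (including the empty word), and X the sum of the letters.  Two identities
   hold already for words: F (1 - X) = 1 - S, since w is in S(u) iff u embeds
   into w but not into w minus its last letter; and F N = S C, by cutting a word
   whose last n letters dominate u right after the first embedding of u, which
   is possible because u is weakly increasing.  Commutatively,
   S (C (1 - X) + N) = F N (1 - X) + S N = (1 - S) N + S N = N. *)

From HB Require Import structures.
From mathcomp Require Import all_boot all_order all_algebra zify.
From Stdlib Require Import FunctionalExtensionality.
Set Implicit Arguments. Unset Strict Implicit. Unset Printing Implicit Defensive.
Import Order.TTheory GRing.Theory Num.Theory.

Lemma all2_leqP (r V : seq nat) :
  reflect (size V = size r /\ forall t, t < size r -> nth 0 r t <= nth 0 V t)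
          (all2 leq r V).
Proof.
elim: r V => [|a r IH] [|x V] /=; [by constructor | by constructor; case | by constructor; case |].
apply: (iffP andP) => [[ax /IH [sV leV]]|[sV leV]].
  by split; [rewrite sV | case=> //= t; rewrite ltnS; apply: leV].
split; first exact: (leV 0).
by apply/IH; split; [case: sV | move=> t lt; exact: (leV t.+1 lt)].
Qed.

Definition occurs (u W : seq nat) := has (embeds_at u W) (iota 0 (size W).+1).

Definition dominates_suffix (u V : seq nat) :=
  (size V < size u) && all2 leq (drop (size u - size V) u) V.

Section Embeddings.
Variable u : seq nat.
Local Notation n := (size u).
Implicit Types (W : seq nat) (i k : nat).

Lemma embedsP W i :
  reflect (i + n <= size W /\ forall k, k < n -> nth 0 u k <= nth 0 W (i + k))
          (embeds_at u W i).
Proof.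
apply: (iffP andP) => [[fit /allP le_uW]|[fit le_uW]]; split => //.
  by move=> k lt; apply: le_uW; rewrite mem_iota.
by apply/allP => k; rewrite mem_iota => /andP [_ lt]; apply: le_uW.
Qed.

Lemma embeds_at_take W k i :
  embeds_at u (take k W) i = (i + n <= k) && embeds_at u W i.
Proof.
apply/embedsP/andP => [[fit le_uW]|[fitk /embedsP [fit le_uW]]].
  rewrite size_take_min leq_min in fit; case/andP: fit => fitk fit.
  split => //; apply/embedsP; split => // t lt.
  by have := le_uW t lt; rewrite nth_take //; lia.
split; first by rewrite size_take_min leq_min fitk fit.
by move=> t lt; rewrite nth_take ?le_uW //; lia.
Qed.

Lemma occursP W : reflect (exists i, embeds_at u W i) (occurs u W).
Proof.
apply: (iffP hasP) => [[i _ ei]|[i ei]]; first by exists i.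
exists i => //; rewrite mem_iota add0n ltnS.
by case/embedsP: ei => fit _; exact: leq_trans (leq_addr _ _) fit.
Qed.

Lemma inSP W :
  reflect (embeds_at u W (size W - n) /\ forall i, embeds_at u W i -> i = size W - n)
          (inS u W).
Proof.
apply: (iffP andP) => [[elast /allP only]|[elast only]]; split => //.
  move=> i ei; apply/eqP; apply: (implyP (only i _)) => //.
  rewrite mem_iota add0n ltnS.
  by case/embedsP: ei => fit _; exact: leq_trans (leq_addr _ _) fit.
by apply/allP => i _; apply/implyP => /only ->.
Qed.

Lemma occurs_take W k : occurs u (take k W) -> occurs u W.
Proof.
by case/occursP => i; rewrite embeds_at_take => /andP [_ ei]; apply/occursP; exists i.
Qed.

Lemma inS_take_inj W k1 k2 : k1 <= size W -> k2 <= size W ->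
  inS u (take k1 W) -> inS u (take k2 W) -> k1 = k2.
Proof.
wlog le12 : k1 k2 / k1 <= k2 => [sym k1W k2W S1 S2|k1W k2W /inSP [e1 _] /inSP [_ only2]].
  by case: (leqP k1 k2) => [le12|/ltnW le21]; [|symmetry]; apply: sym.
rewrite size_takel // in e1 only2; move: e1; rewrite embeds_at_take => /andP [fit1 e1].
have e2 : embeds_at u (take k2 W) (k1 - n) by rewrite embeds_at_take e1 andbT; lia.
by have := only2 _ e2; rewrite size_takel //; lia.
Qed.

Lemma inS_first_occurrence W : 0 < n ->
  inS u W = occurs u W && ~~ occurs u (take (size W).-1 W).
Proof.
move=> u_gt0; apply/inSP/andP => [[elast only]|[/occursP [i ei] /occursP noinit]].
  split; first by apply/occursP; exists (size W - n).
  apply/occursP => -[i]; rewrite embeds_at_take => /andP [fit /only ei].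
  by move: fit (elast) => /[swap] /embedsP [fitW _]; lia.
have only j : embeds_at u W j -> j = size W - n.
  move=> ej; have [fitj _] := embedsP _ _ ej.
  apply/eqP; rewrite eqn_leq; apply/andP; split; first lia.
  by rewrite leqNgt; apply/negP => lt; apply: noinit; exists j; rewrite embeds_at_take ej; lia.
by split; [rewrite -(only i ei) | exact: only].
Qed.

Lemma inS_split_of_free_dominated W k : 0 < n ->
  ~~ occurs u (take k W) -> all2 leq u (drop k W) ->
  exists2 k', k' <= size W & inS u (take k' W) && dominates_suffix u (drop k' W).
Proof.
move=> u_gt0 /occursP free /all2_leqP [sdrop le_drop]; rewrite size_drop in sdrop.
have ek : embeds_at u W k.
  apply/embedsP; split=> [|t lt]; first lia.
  by rewrite -nth_drop; apply: le_drop.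
have late i : embeds_at u W i -> k < i + n.
  move=> ei; rewrite ltnNge; apply/negP => le; apply: free.
  by exists i; rewrite embeds_at_take le.
have [p ep pmin] := ex_minnP (ex_intro _ k ek).
have [fitp _] := embedsP _ _ ep; have kp := late _ ep.
exists (p + n) => //; apply/andP; split.
  apply/inSP; rewrite size_takel // addnK embeds_at_take leqnn ep; split=> // i.
  by rewrite embeds_at_take => /andP [fit /pmin]; lia.
rewrite /dominates_suffix size_drop; apply/andP; split; first lia.
apply/all2_leqP; rewrite !size_drop; split=> [|t lt]; first lia.
have lt' : p + n + t - k < n by lia.
have := le_drop _ lt'; rewrite !nth_drop.
have -> : k + (p + n + t - k) = p + n + t by lia.
by have -> : n - (size W - (p + n)) + t = p + n + t - k by lia.
Qed.

Hypothesis u_sorted : sorted leq u.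

Lemma free_dominated_of_inS_split W k : k <= size W ->
  inS u (take k W) -> dominates_suffix u (drop k W) ->
  ~~ occurs u (take (size W - n) W) && all2 leq u (drop (size W - n) W).
Proof.
move=> kW /inSP [ek only] /andP [short /all2_leqP [_ le_tail]].
rewrite size_takel // in ek only; rewrite size_drop in short.
move: (ek); rewrite embeds_at_take => /andP [fitk /embedsP [_ le_ek]].
apply/andP; split.
  apply/occursP => -[i]; rewrite embeds_at_take => /andP [fit ei].
  have ik : i + n <= k by lia.
  by have := only i; rewrite embeds_at_take ei ik => /(_ isT); lia.
apply/all2_leqP; rewrite size_drop; split=> [|t lt]; first lia.
rewrite nth_drop; case: (ltnP (size W - n + t) k) => pos.
  have lt' : size W - n + t - (k - n) < n by lia.
  have := le_ek _ lt'; have -> : k - n + (size W - n + t - (k - n)) = size W - n + t by lia.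
  apply: leq_trans; apply: (sorted_leq_nth leq_trans leqnn 0 u_sorted); rewrite ?inE; lia.
have lt' : size W - n + t - k < size (drop (n - size (drop k W)) u).
  by rewrite !size_drop; lia.
have := le_tail _ lt'; rewrite !nth_drop size_drop.
have -> : k + (size W - n + t - k) = size W - n + t by lia.
by have -> : n - (size W - k) + (size W - n + t - k) = t by lia.
Qed.

End Embeddings.

Local Open Scope ring_scope.

Definition indic (b : bool) : int := if b then 1 else 0.

Lemma indicM a b : indic a * indic b = indic (a && b).
Proof. by case: a; case: b; rewrite /= ?mulr1 ?mulr0. Qed.

Lemma sum_indic_count (T : Type) (r : seq T) (P : pred T) :
  \sum_(x <- r) indic (P x) = (count P r)%:Z.
Proof.
elim: r => [|x r IH]; first by rewrite big_nil.
by rewrite big_cons IH /=; case: (P x); rewrite //= add0n PoszD.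
Qed.

Lemma sum_ord_single N k0 (F : nat -> int) : (k0 < N)%N ->
  (forall k, (k < N)%N -> k != k0 -> F k = 0) -> \sum_(k < N) F k = F k0.
Proof.
move=> lt0 F0; rewrite (bigD1 (Ordinal lt0)) //= big1 ?addr0 // => k nek.
by apply: F0 => //; apply: contra nek => /eqP ek; apply/eqP/val_inj.
Qed.

Lemma sum_indic_unique N (P : nat -> bool) :
  (forall k1 k2, (k1 < N)%N -> (k2 < N)%N -> P k1 -> P k2 -> k1 = k2) ->
  \sum_(k < N) indic (P k) = indic [exists k : 'I_N, P k].
Proof.
move=> Puniq; case: existsP => [[k Pk]|noP].
  rewrite (bigD1 k) //= Pk big1 ?addr0 // => k' nek'.
  case Pk': (P k') => //; case/eqP: nek'; apply/val_inj.
  by apply: Puniq; rewrite ?ltn_ord ?Pk ?Pk'.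
by apply: big1 => k _; case Pk: (P k) => //; case: noP; exists k.
Qed.

Lemma smulC m (a b : series m) : smul a b = smul b a.
Proof.
apply: functional_extensionality => e; rewrite /smul.
set S := (\sum_i e i)%N.
have leS i : (e i <= S)%N by rewrite /S (bigD1 i) //= leq_addr.
pose compl (d : {ffun 'I_m -> 'I_S.+1}) : {ffun 'I_m -> 'I_S.+1} :=
  [ffun i => if (d i <= e i)%N then inord (e i - d i) else d i].
have complE (d : {ffun 'I_m -> 'I_S.+1}) i : (d i <= e i)%N -> val (compl d i) = (e i - d i)%N.
  by move=> die; rewrite ffunE die; apply: inordK; rewrite ltnS (leq_trans (leq_subr _ _)).
have complK : involutive compl.
  move=> d; apply/ffunP => i; case: (leqP (d i) (e i)) => die.
    have cdie : (compl d i <= e i)%N by rewrite complE // leq_subr.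
    by apply/val_inj; rewrite /= complE // complE // subKn.
  by rewrite !ffunE !(leqNgt (d i)) die /= (leqNgt (d i)) die.
have compl_le (d : {ffun 'I_m -> 'I_S.+1}) :
    [forall i, (compl d i <= e i)%N] = [forall i, (d i <= e i)%N].
  apply/forallP/forallP => le_de i; last by rewrite complE ?leq_subr.
  by move: (le_de i); rewrite ffunE; case: ifP => // /negbT /negP.
rewrite (reindex_inj (inv_inj complK)) /=.
apply: eq_big => d; first by rewrite compl_le.
move=> le_de; have die i : (d i <= e i)%N by apply/forallP: i; rewrite -compl_le.
rewrite mulrC; congr (_ * _); congr (_ _); apply/ffunP => i.
  by rewrite !ffunE die inordK ?subKn // ltnS (leq_trans (leq_subr _ _)).
by rewrite !ffunE die inordK // ltnS (leq_trans (leq_subr _ _)).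
Qed.

Section WordSeries.
Variable m : nat.

Definition wseries := seq 'I_m -> int.

Definition wadd (f g : wseries) : wseries := fun w => f w + g w.
Definition wopp (f : wseries) : wseries := fun w => - f w.
Definition wzero : wseries := fun _ => 0.
Definition wone : wseries := fun w => indic (w == [::]).
Definition wmul (f g : wseries) : wseries :=
  fun w => \sum_(k < (size w).+1) f (take k w) * g (drop k w).

Lemma big_wadd_apply (I : Type) (r : seq I) (P : pred I) (F : I -> wseries) w :
  (\big[wadd/wzero]_(i <- r | P i) F i) w = \sum_(i <- r | P i) F i w.
Proof. exact: (big_morph (fun f : wseries => f w) (id1 := 0) (op1 := +%R)). Qed.

Lemma eq_wmul f f' g g' w : (forall v, f v = f' v) -> (forall v, g v = g' v) ->
  wmul f g w = wmul f' g' w.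
Proof. by move=> ff' gg'; apply: eq_bigr => k _; rewrite ff' gg'. Qed.

Lemma wmulr1 f w : wmul f wone w = f w.
Proof.
rewrite /wmul /wone big_ord_recr /= take_size drop_size eqxx mulr1 big1 ?add0r //.
move=> k _; case: eqP => [drop0|]; last by rewrite mulr0.
by move: (ltn_ord k); rewrite -subn_gt0 -size_drop drop0.
Qed.

Lemma wmul1r f w : wmul wone f w = f w.
Proof.
rewrite /wmul /wone big_ord_recl /= take0 drop0 mul1r big1 ?addr0 // => k _.
case: eqP => [take0|]; last by rewrite mul0r.
by move: (ltn_ord k) (congr1 size take0); rewrite /bump /= add1n size_takel.
Qed.

Lemma wmulDr f g h w : wmul f (wadd g h) w = wmul f g w + wmul f h w.
Proof. by rewrite -big_split; apply: eq_bigr => k _; rewrite mulrDr. Qed.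

Lemma wmulDl f g h w : wmul (wadd f g) h w = wmul f h w + wmul g h w.
Proof. by rewrite -big_split; apply: eq_bigr => k _; rewrite mulrDl. Qed.

Lemma wmulNl f g w : wmul (wopp f) g w = - wmul f g w.
Proof. by rewrite /wmul -sumrN; apply: eq_bigr => k _; rewrite mulNr. Qed.

Lemma wmulNr f g w : wmul f (wopp g) w = - wmul f g w.
Proof. by rewrite /wmul -sumrN; apply: eq_bigr => k _; rewrite mulrN. Qed.

Lemma wmulA f g h w : wmul f (wmul g h) w = wmul (wmul f g) h w.
Proof.
rewrite /wmul; set L := size w.
pose F i k := f (take i w) * (g (drop i (take k w)) * h (drop k w)).
transitivity (\sum_(i < L.+1) \sum_(k < L.+1) (if (i <= k)%N then F i k else 0)).
  apply: eq_bigr => i _; rewrite size_drop big_distrr /= -big_mkcond /=.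
  have iL : (i <= L)%N by rewrite -ltnS.
  transitivity (\sum_(i <= k < L.+1) F i k); last by rewrite big_geq_mkord.
  rewrite -[X in \sum_(X <= _ < _) _](add0n i) big_addn -subSn // big_mkord.
  by apply: eq_bigr => j _; rewrite /F take_drop drop_drop.
rewrite exchange_big /=; apply: eq_bigr => k _.
have kL : (k <= L)%N by rewrite -ltnS.
rewrite -big_mkcond /= big_distrl /= size_takel //.
rewrite (big_ord_widen _ (fun i => f (take i (take k w)) * g (drop i (take k w)) * h (drop k w))
  (ltn_ord k)).
by apply: eq_big => i //= ik; rewrite /F take_takel // mulrA.
Qed.

Lemma wmul_indic_unique (P Q : pred (seq 'I_m)) w :
  (forall k1 k2, (k1 <= size w)%N -> (k2 <= size w)%N ->
     P (take k1 w) && Q (drop k1 w) -> P (take k2 w) && Q (drop k2 w) -> k1 = k2) ->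
  wmul (fun v => indic (P v)) (fun v => indic (Q v)) w =
  indic [exists k : 'I_(size w).+1, P (take k w) && Q (drop k w)].
Proof.
move=> uniq_split; rewrite /wmul; under eq_bigr do rewrite indicM.
apply: (sum_indic_unique (P := fun k => P (take k w) && Q (drop k w))) => k1 k2 k1w k2w.
by apply: uniq_split; rewrite -ltnS.
Qed.

End WordSeries.

Section Abelianization.
Variable m : nat.
Implicit Types (f g : wseries m) (w : seq 'I_m) (c : monom m).

Fixpoint words k : seq (seq 'I_m) :=
  if k is k'.+1 then [seq a :: w | a <- enum 'I_m, w <- words k'] else [:: [::]].

Lemma mem_words k w : (w \in words k) = (size w == k).
Proof.
elim: k w => [|k IH] w /=; first by rewrite inE size_eq0.
apply/allpairsP/idP => [[[a w']] [_ /=]|]; first by rewrite IH => /eqP <- ->.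
case: w => [|a w] //= sw; exists (a, w); split; rewrite ?mem_enum //.
by rewrite IH.
Qed.

Lemma uniq_words k : uniq (words k).
Proof.
elim: k => [|k IH] //=; apply: allpairs_uniq => //; first exact: enum_uniq.
by case=> [a w] [b v] _ _ /= [-> ->].
Qed.

Lemma big_words_add k1 k2 (F : seq 'I_m -> seq 'I_m -> int) :
  \sum_(w <- words (k1 + k2)) F (take k1 w) (drop k1 w) =
  \sum_(w1 <- words k1) \sum_(w2 <- words k2) F w1 w2.
Proof.
elim: k1 F => [|k1 IH] F.
  rewrite add0n /= big_cons big_nil addr0; apply: eq_bigr => w _.
  by rewrite take0 drop0.
rewrite addSn /= !big_allpairs_dep /=; apply: eq_bigr => a _.
exact: (IH (fun w1 w2 => F (a :: w1) w2)).
Qed.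

Lemma card_tuples_words k (P : pred (seq 'I_m)) :
  #|[set t : k.-tuple 'I_m | P t]| = count P (words k).
Proof.
rewrite -sum1dep_card -sum1_count.
have perm_words : perm_eq (map val (index_enum {: k.-tuple 'I_m})) (words k).
  apply: uniq_perm; first by rewrite map_inj_uniq ?index_enum_uniq //; exact: val_inj.
    exact: uniq_words.
  move=> w; rewrite mem_words; apply/mapP/idP => [[t _ ->]|sw]; first by rewrite size_tuple.
  by exists (Tuple sw) => //; rewrite mem_index_enum.
by rewrite -(perm_big _ perm_words) big_map.
Qed.

Definition wcontent w : monom m := content m (word_of w).
Definition mdeg c := (\sum_i c i)%N.

Lemma wcontent_cat w1 w2 :
  wcontent (w1 ++ w2) = [ffun i => (wcontent w1 i + wcontent w2 i)%N].
Proof. by apply/ffunP => i; rewrite !ffunE /word_of map_cat count_cat. Qed.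

Lemma mdeg_wcontent w : mdeg (wcontent w) = size w.
Proof.
rewrite /mdeg; under eq_bigr => i _ do rewrite ffunE.
elim: w => [|a w IH] /=; first exact: big1.
under eq_bigr => i _ do rewrite /= eqSS.
rewrite big_split /= IH (bigD1 a) //= eqxx big1 // => i nei.
by case: eqP => // /val_inj eia; rewrite eia eqxx in nei.
Qed.

Lemma leq_mdeg c i : (c i <= mdeg c)%N.
Proof. by rewrite /mdeg (bigD1 i) //= leq_addr. Qed.

Definition abel f : series m :=
  fun c => \sum_(w <- words (mdeg c) | wcontent w == c) f w.

Lemma eq_abel f g : (forall w, f w = g w) -> abel f = abel g.
Proof. by move=> fg; apply: functional_extensionality => c; apply: eq_bigr. Qed.

Lemma abelD f g : abel (wadd f g) = sadd (abel f) (abel g).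
Proof. by apply: functional_extensionality => c; rewrite /abel /sadd big_split. Qed.

Lemma abelN f : abel (wopp f) = sneg (abel f).
Proof. by apply: functional_extensionality => c; rewrite /abel /sneg sumrN. Qed.

Lemma abel0 : abel (@wzero m) = @szero m.
Proof. by apply: functional_extensionality => c; rewrite /abel big1. Qed.

Lemma abel_indic (P : pred (seq 'I_m)) c :
  abel (fun w => indic (P w)) c =
  (count (fun w => (wcontent w == c) && P w) (words (mdeg c)))%:Z.
Proof.
rewrite /abel big_mkcond -sum_indic_count; apply: eq_bigr => w _.
by case: (_ == c).
Qed.

Lemma abel1 : abel (@wone m) = @sone m.
Proof.
apply: functional_extensionality => c; rewrite abel_indic /sone.
have [->|nec] := eqVneq c [ffun=> 0%N].
  have -> : mdeg [ffun=> 0%N] = 0%N by rewrite /mdeg big1 // => i _; rewrite ffunE.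
  rewrite /= andbT; suff -> : wcontent [::] == [ffun=> 0%N] by [].
  by apply/eqP/ffunP => i; rewrite !ffunE.
rewrite (@eq_count _ _ pred0) ?count_pred0 // => w /=.
apply: contra_neqF nec => /andP [/eqP <- /eqP ->].
by apply/ffunP => i; rewrite !ffunE.
Qed.

Lemma abel_wmulE f g c : abel (wmul f g) c =
  \sum_(k < (mdeg c).+1) \sum_(w1 <- words k) \sum_(w2 <- words (mdeg c - k))
     indic (wcontent (w1 ++ w2) == c) * (f w1 * g w2).
Proof.
set S := mdeg c.
transitivity (\sum_(w <- words S) \sum_(k < S.+1)
    indic (wcontent w == c) * (f (take k w) * g (drop k w))).
  rewrite /abel big_mkcond big_seq [RHS]big_seq; apply: eq_bigr => w.
  rewrite mem_words => /eqP sw; rewrite /wmul sw.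
  case: (_ == c); first by apply: eq_bigr => k _; rewrite mul1r.
  by rewrite big1 // => k _; rewrite mul0r.
rewrite exchange_big /=; apply: eq_bigr => k _.
have kS : (k <= S)%N by rewrite -ltnS.
rewrite -{1}(subnKC kS) -big_words_add; apply: eq_bigr => w _.
by rewrite cat_take_drop.
Qed.

(* Only the split [d] given by the content of [w1] contributes. *)
Lemma sum_content_splits c w1 w2 :
  \sum_(d : {ffun 'I_m -> 'I_(mdeg c).+1} | [forall i, (d i <= c i)%N])
     indic ((wcontent w1 == [ffun i => val (d i)]) &&
            (wcontent w2 == [ffun i => (c i - d i)%N])) =
  indic (wcontent (w1 ++ w2) == c).
Proof.
rewrite wcontent_cat; case: eqP => [ec|nec].
  have ci i : c i = (wcontent w1 i + wcontent w2 i)%N by rewrite -ec ffunE.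
  have lt1 i : (wcontent w1 i < (mdeg c).+1)%N.
    by rewrite ltnS (leq_trans _ (leq_mdeg c i)) // ci leq_addr.
  pose d0 : {ffun 'I_m -> 'I_(mdeg c).+1} := [ffun i => Ordinal (lt1 i)].
  rewrite (bigD1 d0) /=; last by apply/forallP => i; rewrite ffunE ci leq_addr.
  rewrite big1 ?addr0.
    have [-> ->] : [ffun i => val (d0 i)] = wcontent w1 /\
                   [ffun i => (c i - d0 i)%N] = wcontent w2.
      by split; apply/ffunP => i; rewrite ffunE [d0 i]ffunE /= ?ci ?addKn.
    by rewrite !eqxx.
  move=> d /andP [_ ned]; case: eqP => //= ed; case/eqP: ned.
  apply/ffunP => i; apply/val_inj; move/ffunP: ed => /(_ i).
  by rewrite !ffunE /= => <-; rewrite ffunE.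
apply: big1 => d /forallP led; case: eqP => //= e1; case: eqP => //= e2.
by case: nec; apply/ffunP => i; rewrite ffunE e1 e2 !ffunE subnKC.
Qed.

Lemma mdeg_sub c (d : {ffun 'I_m -> 'I_(mdeg c).+1}) :
  [forall i, (d i <= c i)%N] ->
  mdeg [ffun i => (c i - d i)%N] = (mdeg c - mdeg [ffun i => val (d i)])%N.
Proof.
move/forallP=> led; apply/eqP; rewrite -(eqn_add2r (mdeg [ffun i => val (d i)])).
rewrite subnK; last by apply: leq_sum => i _; rewrite ffunE led.
by rewrite /mdeg -big_split /=; apply/eqP/eq_bigr => i _; rewrite !ffunE subnK.
Qed.

Lemma abelM f g : abel (wmul f g) = smul (abel f) (abel g).
Proof.
apply: functional_extensionality => c; rewrite abel_wmulE /smul /abel.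
set S := mdeg c.
pose split_ok (d : {ffun 'I_m -> 'I_S.+1}) w1 w2 :=
  (wcontent w1 == [ffun i => val (d i)]) && (wcontent w2 == [ffun i => (c i - d i)%N]).
symmetry; transitivity (\sum_(d : {ffun 'I_m -> 'I_S.+1} | [forall i, (d i <= c i)%N])
   \sum_(k < S.+1) \sum_(w1 <- words k) \sum_(w2 <- words (S - k))
     indic (split_ok d w1 w2) * (f w1 * g w2)).
  apply: eq_bigr => d led; set k0 := mdeg [ffun i => val (d i)].
  have k0S : (k0 < S.+1)%N.
    by rewrite ltnS; apply: leq_sum => i _; rewrite ffunE; exact: (forallP led i).
  rewrite (sum_ord_single (k0 := k0) (F := fun k => \sum_(w1 <- words k)
      \sum_(w2 <- words (S - k)) indic (split_ok d w1 w2) * (f w1 * g w2))) //.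
    rewrite /k0 -mdeg_sub // big_distrl !big_mkcond /=; apply: eq_bigr => w1 _.
    rewrite /split_ok.
    case: (_ == _) => /=; last by rewrite big1 // => w2 _; rewrite mul0r.
    rewrite big_distrr big_mkcond /=; apply: eq_bigr => w2 _.
    by case: (_ == _); rewrite ?mul1r ?mul0r ?mulr0.
  move=> k _ nek; rewrite /split_ok big_seq; apply: big1 => w1; rewrite mem_words => /eqP sw1.
  apply: big1 => w2 _; case: eqP => [e1|_]; last by rewrite mul0r.
  by case/eqP: nek; rewrite /k0 -e1 mdeg_wcontent.
rewrite exchange_big /=; apply: eq_bigr => k _.
rewrite exchange_big /=; apply: eq_bigr => w1 _.
rewrite exchange_big /=; apply: eq_bigr => w2 _.
by rewrite -big_distrl /= sum_content_splits.
Qed.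

End Abelianization.

Section Letters.
Variable m : nat.

Lemma size_word_of (w : seq 'I_m) : size (word_of w) = size w.
Proof. exact: size_map. Qed.

Lemma word_of_take (w : seq 'I_m) k : word_of (take k w) = take k (word_of w).
Proof. exact: map_take. Qed.

Lemma word_of_drop (w : seq 'I_m) k : word_of (drop k w) = drop k (word_of w).
Proof. exact: map_drop. Qed.

Definition letters_from (a : nat) : wseries m :=
  fun w => indic (if w is [:: x] then (a <= x.+1)%N else false).

Lemma X_abel j : (1 <= j <= m)%N -> @X m j = abel (fun w => indic (word_of w == [:: j])).
Proof.
case/andP=> j1 jm; apply: functional_extensionality => c; rewrite abel_indic /X.
have jlt : (j.-1 < m)%N by rewrite prednK.
pose w0 := [:: Ordinal jlt].
have word_w0 w : (word_of w == [:: j]) = (w == w0).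
  case: w => [|a [|b w]] //=; rewrite /w0 ?eqseq_cons ?andbT ?andbF //.
  apply/eqP/eqP => [ej|->]; last by rewrite /= prednK.
  by apply/val_inj; rewrite /= -ej.
have content_w0 : wcontent w0 = [ffun i : 'I_m => ((i.+1 == j) : nat)].
  by apply/ffunP => i; rewrite !ffunE /= addn0 prednK // eq_sym.
have [->|nec] := eqVneq c [ffun i : 'I_m => ((i.+1 == j) : nat)].
  rewrite (@eq_count _ _ (pred1 w0)) => [|w /=].
    by rewrite count_uniq_mem ?uniq_words // mem_words -content_w0 mdeg_wcontent.
  by rewrite word_w0; have [->|] := eqVneq w w0; rewrite ?andbF // content_w0 eqxx.
rewrite (@eq_count _ _ pred0) ?count_pred0 // => w /=.
rewrite word_w0; have [->|] := eqVneq w w0; rewrite ?andbF //.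
by rewrite content_w0 eq_sym (negbTE nec).
Qed.

Lemma T_abel a : (1 <= a)%N -> @T m a = abel (letters_from a).
Proof.
move=> a1; rewrite /T (eq_big_nat _ _ (F2 := fun j =>
  abel (fun w => indic (word_of w == [:: j])))) => [|j /andP [aj jm]]; last first.
  by apply: X_abel; rewrite (leq_trans a1 aj) -ltnS.
rewrite -(big_morph _ (@abelD m) (@abel0 m)); apply: eq_abel => w.
rewrite big_wadd_apply.
case: w => [|x [|y w]] /=;
  [by rewrite big1 | | by rewrite big1 // => j _; rewrite eqseq_cons andbF].
under eq_bigr => j _ do rewrite eqseq_cons andbT eq_sym.
rewrite sum_indic_count count_uniq_mem ?iota_uniq // mem_iota.
have -> : (x.+1 < a + (m.+1 - a))%N by have := ltn_ord x; lia.
by rewrite andbT /letters_from; case: (a <= x.+1)%N.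
Qed.

Lemma prod_letters_from r w :
  (\big[@wmul m/@wone m]_(a <- r) letters_from a) w = indic (all2 leq r (word_of w)).
Proof.
elim: r w => [|a r IH] w; first by rewrite big_nil /wone; case: w.
rewrite big_cons /wmul; case: w => [|x w] /=.
  by rewrite big_ord_recl big_ord0 mul0r addr0.
rewrite big_ord_recl /= mul0r add0r big_ord_recl /= take0 drop0 IH indicM.
rewrite big1 ?addr0 // => k _; rewrite /letters_from /bump add1n.
by case: w k => [[]|y w] k //; rewrite mul0r.
Qed.

Lemma wmul_letters_from1 f w :
  wmul f (letters_from 1) w = indic (0 < size w)%N * f (take (size w).-1 w).
Proof.
have letters1 v : letters_from 1 v = indic (size v == 1)%N by case: v => [|y [|z v]].
rewrite /wmul; case: w => [|x w]; first by rewrite big_ord_recl big_ord0 /= !mul0r mulr0 addr0.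
rewrite (sum_ord_single (k0 := size w)
  (F := fun k => f (take k (x :: w)) * letters_from 1 (drop k (x :: w)))) //= => [|k lt nek];
  rewrite letters1 size_drop /=; first by rewrite subSnn mulr1 mul1r.
by case: eqP => [sk|_]; [case/eqP: nek; lia | rewrite mulr0].
Qed.

End Letters.

Section WordIdentities.
Variables (m : nat) (u : seq nat).
Local Notation n := (size u).
Hypothesis u_gt0 : (0 < n)%N.

Definition inSw : wseries m := fun w => indic (inS u (word_of w)).
Definition freew : wseries m := fun w => indic (~~ occurs u (word_of w)).
Definition dominatesw : wseries m := fun w => indic (all2 leq u (word_of w)).
Definition suffixw : wseries m := fun w => indic (dominates_suffix u (word_of w)).

Lemma wmul_free_letters w :
  wmul freew (wadd (@wone m) (wopp (@letters_from m 1%N))) w = wone w - inSw w.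
Proof.
rewrite wmulDr wmulr1 wmulNr wmul_letters_from1 /freew /inSw /wone.
have [->|w_ne] := eqVneq w [::].
  have e0 : embeds_at u [::] 0 = false by rewrite /embeds_at /= add0n leqNgt u_gt0.
  by rewrite /occurs /inS /= sub0n e0 mul0r !subr0.
have w_gt0 : (0 < size w)%N by rewrite lt0n size_eq0.
rewrite w_gt0 mul1r sub0r word_of_take -(size_word_of w) inS_first_occurrence //.
move: (@occurs_take u (word_of w) (size (word_of w)).-1).
by case: (occurs u (word_of w)); case: (occurs u (take _ _)) => // /(_ isT).
Qed.

Hypothesis u_sorted : sorted leq u.

Lemma wmul_free_dominates w : wmul freew dominatesw w = wmul inSw suffixw w.
Proof.
rewrite !wmul_indic_unique => [|k1 k2 k1w k2w|k1 k2 k1w k2w]; first last.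
- move=> /andP [_ /all2_leqP [s1 _]] /andP [_ /all2_leqP [s2 _]].
  by move: s1 s2; rewrite !size_word_of !size_drop; lia.
- move=> /andP [S1 _] /andP [S2 _]; rewrite !word_of_take in S1 S2.
  by apply: (inS_take_inj _ _ S1 S2); rewrite size_word_of.
congr indic; apply/existsP/existsP => [[k /andP [free dom]]|[k /andP [S suf]]].
  rewrite word_of_take word_of_drop in free dom.
  have [k' k'W /andP [S' suf']] := inS_split_of_free_dominated u_gt0 free dom.
  rewrite size_word_of in k'W.
  by exists (Ordinal (k'W : (k' < (size w).+1)%N)); rewrite /= word_of_take word_of_drop S'.
rewrite word_of_take word_of_drop in S suf.
have kW : (k <= size (word_of w))%N by rewrite size_word_of -ltnS.
have /andP [free' dom'] := free_dominated_of_inS_split u_sorted kW S suf.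
have lt : (size (word_of w) - n < (size w).+1)%N by rewrite size_word_of ltnS leq_subr.
by exists (Ordinal lt); rewrite /= word_of_take word_of_drop free' dom'.
Qed.

End WordIdentities.

Lemma abel_wmulAC m (f g h : wseries m) :
  abel (wmul (wmul f g) h) = abel (wmul (wmul f h) g).
Proof.
rewrite -(eq_abel (wmulA f g h)) -(eq_abel (wmulA f h g)) !abelM.
by rewrite (smulC (abel g)).
Qed.

Lemma abel_prod_T m (r : seq nat) : {in r, forall a, 0 < a}%N ->
  \big[@smul m/@sone m]_(a <- r) @T m a =
  abel (fun w => indic (all2 leq r (word_of w))).
Proof.
move=> r_gt0; rewrite big_seq (eq_bigr (fun a => abel (@letters_from m a))) => [|a ar].
  rewrite -big_seq -(big_morph _ (@abelM m) (@abel1 m)); apply: eq_abel => w.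
  exact: prod_letters_from.
by apply: T_abel; apply: r_gt0.
Qed.

Lemma abel_one_sub_letters m :
  ssub (@sone m) (\big[@sadd m/@szero m]_(1 <= i < m.+1) @X m i) =
  abel (wadd (@wone m) (wopp (@letters_from m 1%N))).
Proof. by rewrite -/(@T m 1%N) T_abel // /ssub abelD abelN abel1. Qed.

Lemma big_nat_nth_drop (R : Type) (idx : R) (op : R -> R -> R) (F : nat -> R) r i :
  (i <= size r)%N ->
  \big[op/idx]_(i.+1 <= j < (size r).+1) F (nth 0%N r j.-1) = \big[op/idx]_(a <- drop i r) F a.
Proof.
move=> ir; rewrite big_add1 /= [RHS](big_nth 0%N) size_drop.
rewrite -[X in \big[_/_]_(X <= _ < _) _](add0n i) big_addn.
by apply: eq_bigr => j _; rewrite nth_drop addnC.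
Qed.

Lemma indic_dominates_suffix (u V : seq nat) : (0 < size u)%N ->
  indic (dominates_suffix u V) =
  indic (V == [::]) + \sum_(1 <= i < size u) indic (all2 leq (drop i u) V).
Proof.
move=> u_gt0; have [-> | V_ne] := eqVneq V [::].
  rewrite big_nat big1 ?addr0 => [|i /andP [_ lt]].
    by rewrite /dominates_suffix /= subn0 drop_size u_gt0.
  by case: (drop i u) (size_drop i u) => [|a d] //= sd; lia.
rewrite add0r big_geq_mkord big_mkcond /=.
rewrite (eq_bigr (fun i : 'I_(size u) => indic ((0 < i)%N && all2 leq (drop i u) V)));
  last by move=> i _; case: (0 < i)%N.
rewrite (sum_indic_unique (P := fun i => (0 < i)%N && all2 leq (drop i u) V)); last first.
  move=> i1 i2 lt1 lt2 /andP [_ /all2_leqP [s1 _]] /andP [_ /all2_leqP [s2 _]].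
  by move: s1 s2; rewrite !size_drop; lia.
congr indic; apply/andP/existsP => [[short /all2_leqP [sV leV]]|].
  have V_gt0 : (0 < size V)%N by rewrite lt0n size_eq0.
  have lt : (size u - size V < size u)%N by lia.
  exists (Ordinal lt) => /=; apply/andP; split; first lia.
  by apply/all2_leqP.
case=> i /andP [i_gt0 /all2_leqP [sV leV]].
have lti := ltn_ord i; rewrite size_drop in sV; split; first lia.
apply/all2_leqP; rewrite sV; have -> : (size u - (size u - i) = i)%N by lia.
by split; first rewrite size_drop.
Qed.

Section CommutativeImages.
Variables (m : nat) (u : seq nat).
Local Notation n := (size u).
Hypothesis u_letters : all (fun a => (1 <= a <= m)%N) u.

Lemma letters_gt0 : {in u, forall a, 0 < a}%N.
Proof. by move=> a au; move/allP: u_letters => /(_ a au) /andP []. Qed.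

Lemma abel_dominatesw :
  \big[@smul m/@sone m]_(i < n) @T m (nth 0%N u i) = abel (@dominatesw m u).
Proof.
by rewrite -[RHS](@abel_prod_T m _ letters_gt0) [in RHS](big_nth 0%N) big_mkord.
Qed.

Hypothesis u_gt0 : (0 < n)%N.

Lemma abel_suffixw :
  sadd (@sone m) (\big[@sadd m/@szero m]_(1 <= i < n)
                    \big[@smul m/@sone m]_(i.+1 <= j < n.+1) @T m (nth 0%N u j.-1))
  = abel (@suffixw m u).
Proof.
rewrite (eq_big_nat _ _ (F2 := fun i =>
  abel (fun w => indic (all2 leq (drop i u) (word_of w))))) => [|i /andP [_ lt]]; last first.
  rewrite big_nat_nth_drop ?abel_prod_T // ?(ltnW lt) // => a /mem_drop.
  exact: letters_gt0.
rewrite -abel1 -(big_morph _ (@abelD m) (@abel0 m)) -abelD; apply: eq_abel => w.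
rewrite /wadd big_wadd_apply /suffixw indic_dominates_suffix //.
by rewrite /wone -!size_eq0 size_word_of.
Qed.

Lemma abel_inSw : @Sser m u = abel (@inSw m u).
Proof.
apply: functional_extensionality => c; rewrite /Sser abel_indic.
by rewrite (card_tuples_words _ (fun w => (wcontent w == c) && inS u (word_of w))).
Qed.

End CommutativeImages.

Theorem theorem9 (m : nat) (u : seq nat)
  (hm : (1 <= m)%N)
  (hn : (0 < size u)%N)
  (hu : all (fun a => (1 <= a <= m)%N) u)
  (hinc : sorted leq u) :
  let n := size u in
  let N := \big[@smul m/@sone m]_(i < n) @T m (nth 0%N u i) in
  let D := sadd
             (smul (sadd (@sone m)
                      (\big[@sadd m/@szero m]_(1 <= i < n)
                          \big[@smul m/@sone m]_(i.+1 <= j < n.+1) @T m (nth 0%N u j.-1)))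
                   (ssub (@sone m) (\big[@sadd m/@szero m]_(1 <= i < m.+1) @X m i)))
             N in
  smul (@Sser m u) D = N.
Proof.
move=> n N D; rewrite /D /N /n abel_suffixw // abel_one_sub_letters abel_dominatesw //.
rewrite abel_inSw -!abelM -abelD -abelM.
set S := @inSw m u; set F := @freew m u; set Dom := @dominatesw m u.
set P := wadd (@wone m) (wopp (@letters_from m 1%N)).
transitivity (abel (wadd (wmul (wmul F Dom) P) (wmul S Dom))).
  apply: eq_abel => w; rewrite wmulDr wmulA; congr (_ + _).
  by apply: eq_wmul => // v; rewrite wmul_free_dominates.
rewrite abelD abel_wmulAC.
rewrite (eq_abel (f := wmul (wmul F P) Dom) (g := wadd Dom (wopp (wmul S Dom)))) => [|w].
  by rewrite abelD abelN; apply: functional_extensionality => c; rewrite /sadd /sneg addrNK.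
rewrite (eq_wmul (f' := wadd (@wone m) (wopp S)) (g' := Dom)) // => [|v].
  by rewrite wmulDl wmul1r wmulNl.
exact: wmul_free_letters.
Qed.
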